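(* Fix $0<\varepsilon<1/4$ and $0<\beta<1/4$. Let $\delta(n)$ be a positive non-increasing sequence such that for every positive integer $n$, $$P_n:=\frac{e^\varepsilon}{e^\varepsilon+1}+(e^\varepsilon+1)\sum_{j=1}^n\delta(j)\le 1-\beta,$$ and such that $b(n):=1/\delta(n)$ is an integer for every $n$. Define $S(1)=2$ and $S(n+1)=b(n)^{S(n)}$. Then for every positive integer $n$ there exists a distribution $\mathcal{D}_n$ over databases $D\in[S(n)]^n$, where $[S(n)]=\{0,1,\dots,S(n)-1\}$, such that for every $(\varepsilon,\delta(n))$-differentially private mechanism $\mathcal{M}:[S(n)]^n\to[S(n)]$, $$\Pr[\min D\le \mathcal{M}(D)\le \max D]\le P_n,$$ where the probability is over $D\sim\mathcal{D}_n$ and the coins of $\mathcal{M}$.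
   Context: A randomized algorithm $M:X^n\to Y$ is $(\varepsilon,\delta)$-differentially private if for every two databases $D,D'\in X^n$ differing in exactly one row and every set $T\subseteq Y$, $\Pr[M(D)\in T]\le e^{\varepsilon}\Pr[M(D')\in T]+\delta$. *)

From HB Require Import structures.
From mathcomp Require Import all_boot all_order all_algebra.
From mathcomp Require Import all_classical all_reals all_analysis.
Set Implicit Arguments. Unset Strict Implicit. Unset Printing Implicit Defensive.
Import Order.TTheory GRing.Theory Num.Theory.
Local Open Scope ring_scope.

(* S(1) = 2, S(n+1) = b(n)^S(n); Sseq b n = Saux b (n-1). Sseq b 0 = 2 is junk. *)
Fixpoint Saux (b : nat -> nat) (k : nat) : nat :=
  match k with
  | 0 => 2
  | k'.+1 => (b k'.+1 ^ Saux b k')%N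
  end.
Definition Sseq (b : nat -> nat) (n : nat) : nat := Saux b n.-1.

Definition db (n S : nat) := {ffun 'I_n -> 'I_S}.

Definition minD n S (D : db n S) : nat := \big[minn/S]_(i < n) (D i : nat).
Definition maxD n S (D : db n S) : nat := \max_(i < n) (D i : nat).

Definition is_distr (R : realType) (T : finType) (p : T -> R) :=
  (forall x, 0 <= p x) /\ \sum_(x : T) p x = 1.

Definition neighbors n S (D D' : db n S) := #|[set i | D i != D' i]| = 1%N.

Definition is_mech (R : realType) n S (M : db n S -> 'I_S -> R) :=
  forall D, is_distr (M D).

Definition is_dp (R : realType) n S (eps del : R) (M : db n S -> 'I_S -> R) :=
  forall D D' : db n S, neighbors D D' ->
  forall T : {set 'I_S},
    \sum_(y in T) M D y <= expR eps * \sum_(y in T) M D' y + del.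

Definition success (R : realType) n S (Dn : db n S -> R) (M : db n S -> 'I_S -> R) :=
  \sum_(D : db n S) Dn D * \sum_(y : 'I_S | (minD D <= y <= maxD D)%N) M D y.

Definition Pbound (R : realType) (eps : R) (delta : nat -> R) (n : nat) : R :=
  expR eps / (expR eps + 1) + (expR eps + 1) * \sum_(1 <= j < n.+1) delta j.

From HB Require Import structures.
From mathcomp Require Import all_boot all_order all_algebra.
From mathcomp Require Import all_classical all_reals all_analysis.
From mathcomp Require Import zify ring lra.
Import Order.TTheory GRing.Theory Num.Theory.
Set Implicit Arguments. Unset Strict Implicit. Unset Printing Implicit Defensive.
Local Open Scope ring_scope.

(* The hard distributions are built by induction on n, keeping the invariant
   success <= P_n - e^eps delta(n).  For n = 1 take one uniform row over {0,1}:
   a DP mechanism outputs the row with probability at most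
   (e^eps + delta(1)) / (e^eps + 1).  For the inductive step put B = b(n), draw
   D ~ D_n and a uniform S(n)-digit base-B numeral z, and let Y have row j equal
   to z truncated to its first D_j digits, plus z itself as an extra row.  A
   mechanism M' for Y yields a mechanism for D that draws z itself and decodes
   the answer w as the length of the longest common prefix of w and z; it is
   (eps, delta(n+1))-DP because neighbouring D give neighbouring Y.  An answer
   in [min Y, max Y] decodes into [min D, max D] unless w agrees with z on
   max D + 1 digits.  Replacing the last row of Y by z truncated to max D digits
   costs e^eps and delta(n+1), after which the next digit of z is independent of
   the input, so this happens with probability at most e^eps / B + delta(n+1)
   = e^eps delta(n) + delta(n+1). *)

Lemma distr_ge0 (R : realType) (T : finType) (p : T -> R) x : is_distr p -> 0 <= p x.
Proof. by case. Qed.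

Lemma distr_sum1 (R : realType) (T : finType) (p : T -> R) : is_distr p -> \sum_x p x = 1.
Proof. by case. Qed.

Section Digits.
Variables (B S : nat).
Local Notation word := 'I_(B ^ S).

(* An element of 'I_(B ^ S) is read as an S-digit base-B numeral; [prefix k w]
   is the number formed by its k leading digits. *)
Definition prefix (k w : nat) : nat := (w %/ B ^ (S - k))%N.

Lemma prefix_eq_le j k w z : (j <= k <= S)%N ->
  prefix k w = prefix k z -> prefix j w = prefix j z.
Proof.
rewrite /prefix => /andP[jk kS] e.
have -> : (S - j = (S - k) + (k - j))%N by lia.
by rewrite expnD !divnMA e.
Qed.

Lemma prefix_mono k w z : (w <= z)%N -> (prefix k w <= prefix k z)%N.
Proof. exact: leq_div2r. Qed.

(* Capped at S - 1, so that it fits in 'I_S. *)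
Definition lcp (w z : nat) : nat := \max_(k < S | prefix k w == prefix k z) k.

Lemma lcp_lt w z : (0 < S)%N -> (lcp w z < S)%N.
Proof.
move=> S_gt0; rewrite -(prednK S_gt0) ltnS.
by apply/bigmax_leqP => k _; rewrite -ltnS prednK.
Qed.

Lemma lcp_ge k w z : (k < S)%N -> prefix k w = prefix k z -> (k <= lcp w z)%N.
Proof.
by move=> kS /eqP e; exact: (@leq_bigmax_cond _ _ (fun k : 'I_S => nat_of_ord k) (Ordinal kS)).
Qed.

Lemma prefix_lt_lcp m w z : (m < lcp w z)%N -> prefix m.+1 w = prefix m.+1 z.
Proof.
move=> lt_m; apply/eqP; apply: contraTT lt_m => ne; rewrite -leqNgt.
apply/bigmax_leqP => k /eqP ek; rewrite leqNgt; apply: contra ne => mk.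
by apply/eqP; apply: prefix_eq_le ek; rewrite mk (ltnW (ltn_ord k)).
Qed.

Definition lcp_ord (S_gt0 : (0 < S)%N) (w z : nat) : 'I_S := Ordinal (lcp_lt w z S_gt0).

Hypothesis B_gt0 : (0 < B)%N.

Lemma prefix_lt k (z : word) : (k <= S)%N -> (prefix k z < B ^ k)%N.
Proof.
move=> kS; rewrite /prefix ltn_divLR ?expn_gt0 ?B_gt0 // -expnD subnKC //; exact: ltn_ord.
Qed.

Lemma trunc_subproof k (z : word) : (prefix k z * B ^ (S - k) < B ^ S)%N.
Proof. exact: leq_ltn_trans (leq_divM _ _) (ltn_ord z). Qed.

Definition trunc k (z : word) : word := Ordinal (trunc_subproof k z).

Lemma prefix_trunc k (z : word) : prefix k (trunc k z) = prefix k z.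
Proof. by rewrite /prefix /= mulnK ?expn_gt0 ?B_gt0. Qed.

Lemma trunc_prefix_eq k m (z z' : word) : (k <= m <= S)%N ->
  prefix m z = prefix m z' -> trunc k z = trunc k z'.
Proof. by move=> kmS e; apply: val_inj => /=; rewrite (prefix_eq_le kmS e). Qed.

Lemma card_prefix_eq m w :
  (#|[pred z : word | prefix m w == prefix m z]| <= B ^ (S - m))%N.
Proof.
have q_gt0 : (0 < B ^ (S - m))%N by rewrite expn_gt0 B_gt0.
rewrite -[X in (_ <= X)%N]card_ord.
apply: (@leq_card_in _ _ (fun z : word => Ordinal (ltn_pmod z q_gt0))).
move=> z z'; rewrite !inE /prefix => /eqP h /eqP h' [e]; apply: val_inj.
by rewrite /= (divn_eq z (B ^ (S - m))) (divn_eq z' (B ^ (S - m))) e -h -h'.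
Qed.

Variable R : realType.

Lemma sum_diag_le m (g : word -> word -> R) : (m <= S)%N ->
  (forall z, is_distr (g z)) ->
  (forall z z' : word, prefix m z = prefix m z' -> g z = g z') ->
  \sum_(w : word) g w w <= (B ^ m)%:R.
Proof.
move=> mS g_distr g_prefix.
have rep_lt (a : 'I_(B ^ m)) : (a * B ^ (S - m) < B ^ S)%N.
  by rewrite -[in X in (_ < X)%N](subnKC mS) expnD ltn_pmul2r ?expn_gt0 ?B_gt0.
pose rep a := Ordinal (rep_lt a).
have g_rep (w : word) : g w w <= \sum_(a : 'I_(B ^ m)) g (rep a) w.
  have -> : g w = g (rep (Ordinal (prefix_lt w mS))).
    by apply: g_prefix; rewrite /prefix /= mulnK ?expn_gt0 ?B_gt0.
  rewrite (bigD1 (Ordinal (prefix_lt w mS))) //= lerDl.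
  by apply: sumr_ge0 => a _; apply: distr_ge0.
apply: le_trans (ler_sum _ (fun w _ => g_rep w)) _.
rewrite exchange_big /= (eq_bigr (fun _ => 1)); last by move=> a _; apply: distr_sum1.
by rewrite sumr_const card_ord.
Qed.

Lemma sum_prefix_mass m (g : word -> word -> R) : (m < S)%N ->
  (forall z, is_distr (g z)) ->
  (forall z z' : word, prefix m z = prefix m z' -> g z = g z') ->
  \sum_(z : word) \sum_(w : word | prefix m.+1 w == prefix m.+1 z) g z w <= (B ^ S.-1)%:R.
Proof.
move=> mS g_distr g_prefix.
have -> : \sum_(z : word) \sum_(w : word | prefix m.+1 w == prefix m.+1 z) g z w =
          \sum_(z : word) \sum_(w : word | prefix m.+1 w == prefix m.+1 z) g w w.
  apply: eq_bigr => z _; apply: eq_bigr => w /eqP e.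
  by rewrite (g_prefix z w) // (prefix_eq_le _ (esym e)) ?leqnSn.
rewrite (exchange_big_dep xpredT) //=.
apply: (@le_trans _ _ (\sum_(w : word) g w w * (B ^ (S - m.+1))%:R)).
  apply: ler_sum => w _.
  rewrite (eq_bigl [pred z : word | prefix m.+1 w == prefix m.+1 z]) // sumr_const.
  by rewrite -[X in X <= _]mulr_natr ler_wpM2l ?ler_nat ?card_prefix_eq // distr_ge0.
rewrite -mulr_suml (@le_trans _ _ ((B ^ m)%:R * (B ^ (S - m.+1))%:R)) //.
  by rewrite ler_wpM2r ?ler0n // sum_diag_le // ltnW.
by rewrite -natrM -expnD ler_nat leq_pexp2l //; lia.
Qed.
End Digits.

Lemma minD_le n S (D : db n S) i : (minD D <= D i)%N.
Proof.
rewrite /minD; have : i \in index_enum 'I_n by rewrite mem_index_enum.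
elim: (index_enum _) => // j r IHr; rewrite in_cons big_cons.
by case/predU1P => [<-|/IHr]; [exact: geq_minl | rewrite geq_min => ->; rewrite orbT].
Qed.

Lemma maxD_ge n S (D : db n S) i : (D i <= maxD D)%N.
Proof. exact: leq_bigmax. Qed.

Lemma maxD_lt n S (D : db n S) : (0 < n)%N -> (maxD D < S)%N.
Proof.
move=> n_gt0; rewrite /maxD.
by have := @bigop.eq_bigmax _ (fun i => nat_of_ord (D i)); rewrite card_ord => /(_ n_gt0) [i ->].
Qed.

Lemma minD_lt n S (D : db n S) : (0 < n)%N -> (minD D < S)%N.
Proof. by move=> n_gt0; exact: leq_ltn_trans (minD_le D (Ordinal n_gt0)) _. Qed.

Lemma row_le_of_minD_le n S (D : db n S) w : (w < S)%N -> (minD D <= w)%N ->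
  exists i, (D i <= w)%N.
Proof.
move=> wS; case: (boolP [exists i, D i <= w]%N) => [/existsP//|/existsPn D_gt].
suff : (w < minD D)%N by rewrite ltnNge => /negP.
rewrite /minD; apply: (big_ind (fun x => w < x)%N) => // [x y wx wy|i _].
  by rewrite leq_min wx wy.
by rewrite ltnNge D_gt.
Qed.

Lemma row_ge_of_maxD_ge n S (D : db n S) w : (0 < n)%N -> (w <= maxD D)%N ->
  exists i, (w <= D i)%N.
Proof.
move=> n_gt0; rewrite /maxD.
have := @bigop.eq_bigmax _ (fun i => nat_of_ord (D i)); rewrite card_ord => /(_ n_gt0) [i ->].
by exists i.
Qed.

Lemma prefix_between n B S k (Y : db n (B ^ S)) z (w : 'I_(B ^ S)) : (0 < n)%N ->
  (forall i, prefix B S k (Y i) = prefix B S k z) ->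
  (minD Y <= w <= maxD Y)%N -> prefix B S k w = prefix B S k z.
Proof.
move=> n_gt0 eY /andP[lo hi].
have [i le_i] := row_le_of_minD_le (ltn_ord w) lo.
have [j ge_j] := row_ge_of_maxD_ge n_gt0 hi.
by apply/eqP; rewrite eqn_leq -{1}(eY j) -(eY i) !prefix_mono.
Qed.

Definition near_db n S (D D' : db n S) := (#|[set i | D i != D' i]| <= 1)%N.

Lemma neighbors_near n S (D D' : db n S) : neighbors D D' -> near_db D D'.
Proof. by rewrite /near_db => ->. Qed.

Section Embedding.
Variables (n B S : nat).
Hypothesis B_gt0 : (0 < B)%N.
Local Notation word := 'I_(B ^ S).

Definition embed_db (D : db n S) (l z : word) : db n.+1 (B ^ S) :=
  [ffun i => if unlift ord_max i is Some j then trunc (D j) z else l].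

Definition embed (D : db n S) (z : word) : db n.+1 (B ^ S) := embed_db D z z.

Lemma prefix_embed D z i : prefix B S (minD D) (embed D z i) = prefix B S (minD D) z.
Proof.
rewrite ffunE; case: unliftP => [j _|_] //.
by apply: (prefix_eq_le _ (prefix_trunc B_gt0 _ _)); rewrite minD_le ltnW.
Qed.

Lemma lcp_embed D (z w : word) : (0 < n)%N ->
  (minD (embed D z) <= w <= maxD (embed D z))%N ->
  (minD D <= lcp B S w z <= maxD D)%N ||
  (prefix B S (maxD D).+1 w == prefix B S (maxD D).+1 z).
Proof.
move=> n_gt0 w_in.
have e := prefix_between (ltn0Sn n) (prefix_embed D z) w_in.
rewrite (lcp_ge (minD_lt D n_gt0) e) /=.
by case: leqP => //= /prefix_lt_lcp ->.
Qed.

Lemma embed_neighbors (D D' : db n S) z :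
  neighbors D D' -> near_db (embed D z) (embed D' z).
Proof.
move=> /neighbors_near /card_le1_eqP DD'; apply/card_le1_eqP => i i'.
rewrite !inE !ffunE.
case: unliftP => [j -> ne|_]; last by rewrite eqxx.
case: unliftP => [j' -> ne'|_]; last by rewrite eqxx.
by rewrite (DD' j j') // inE; [apply: contra ne => /eqP-> | apply: contra ne' => /eqP->].
Qed.

Lemma embed_db_near D (l z : word) : near_db (embed D z) (embed_db D l z).
Proof.
apply/card_le1_eqP => i i'; rewrite !inE !ffunE.
by case: unliftP => [j _|-> _]; [rewrite eqxx | case: unliftP => [j _|-> _]; rewrite ?eqxx].
Qed.

Lemma embed_db_trunc D (z z' : word) : (0 < n)%N ->
  prefix B S (maxD D) z = prefix B S (maxD D) z' ->
  embed_db D (trunc (maxD D) z) z = embed_db D (trunc (maxD D) z') z'.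
Proof.
move=> n_gt0 e; have mS := ltnW (maxD_lt D n_gt0).
apply/ffunP => i; rewrite !ffunE.
by case: unliftP => [j _|_]; apply: trunc_prefix_eq e; rewrite ?maxD_ge ?leqnn mS.
Qed.

End Embedding.

Lemma sum_split_le (R : realType) (T : finType) (f : T -> R) (P P1 P2 : pred T) :
  (forall w, 0 <= f w) -> (forall w, P w -> P1 w || P2 w) ->
  \sum_(w | P w) f w <= \sum_(w | P1 w) f w + \sum_(w | P2 w) f w.
Proof.
move=> f_ge0 P_sub; rewrite !(big_mkcond P) !(big_mkcond P1) (big_mkcond P2) -big_split /=.
apply: ler_sum => w _; case: ifP => [/P_sub/orP[]->|_] /=.
- by rewrite lerDl; case: ifP.
- by rewrite lerDr; case: ifP.
- by rewrite addr_ge0 //; case: ifP.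
Qed.

Lemma sumr_inv_nat (R : realType) N : (0 < N)%N -> \sum_(i < N) (N%:R^-1 : R) = 1.
Proof. by move=> N_gt0; rewrite sumr_const card_ord -[LHS]mulr_natl mulfV ?pnatr_eq0 -?lt0n. Qed.

Lemma dp_near (R : realType) n S (eps d : R) (M : db n S -> 'I_S -> R) (Y Y' : db n S) :
  0 <= eps -> 0 <= d -> is_mech M -> is_dp eps d M -> near_db Y Y' ->
  forall A : pred 'I_S, \sum_(y | A y) M Y y <= expR eps * \sum_(y | A y) M Y' y + d.
Proof.
move=> eps_ge0 d_ge0 M_mech M_dp + A; rewrite /near_db leq_eqVlt ltnS leqn0 cards_eq0.
case/orP => [/eqP YY'|/eqP Y0].
  by have := M_dp _ _ YY' [set y | A y]; rewrite !(eq_bigl _ _ (finset.in_set A)).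
have -> : Y = Y'.
  by apply/ffunP => i; apply/eqP; move/setP/(_ i): Y0; rewrite !inE => /negbFE.
rewrite -[X in X <= _]addr0 lerD // ler_peMl ?sumr_ge0 // => [y _|].
  exact: distr_ge0.
by apply: le_trans (expR_ge1Dx eps); rewrite lerDl.
Qed.

Section Reduction.
Variables (R : realType) (n B S : nat).
Hypotheses (B_gt0 : (0 < B)%N) (S_gt0 : (0 < S)%N).
Local Notation word := 'I_(B ^ S).
Local Notation unif := ((B ^ S)%:R^-1 : R).

Lemma unif_ge0 : 0 <= unif.
Proof. by rewrite invr_ge0 ler0n. Qed.

Lemma sum_unif : \sum_(z : word) unif = 1.
Proof. by rewrite sumr_inv_nat // expn_gt0 B_gt0. Qed.

Definition embed_distr (Dn : db n S -> R) (Y : db n.+1 (B ^ S)) : R :=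
  \sum_(D : db n S) \sum_(z : word) Dn D * unif * (Y == embed D z)%:R.

Lemma sum_embed_distr Dn (F : db n.+1 (B ^ S) -> R) :
  \sum_Y embed_distr Dn Y * F Y = \sum_D \sum_(z : word) Dn D * unif * F (embed D z).
Proof.
under eq_bigr do rewrite mulr_suml.
rewrite exchange_big /=; apply: eq_bigr => D _.
under eq_bigr do rewrite mulr_suml.
rewrite exchange_big /=; apply: eq_bigr => z _.
rewrite (bigD1 (embed D z)) //= eqxx mulr1 big1 ?addr0 // => Y /negbTE->.
by rewrite mulr0 mul0r.
Qed.

Lemma embed_distr_is_distr Dn : is_distr Dn -> is_distr (embed_distr Dn).
Proof.
move=> Dn_distr; split => [Y|].
  apply: sumr_ge0 => D _; apply: sumr_ge0 => z _.
  by rewrite !mulr_ge0 ?unif_ge0 ?ler0n ?distr_ge0.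
rewrite (eq_bigr (fun Y => embed_distr Dn Y * 1)) => [|Y _]; last by rewrite mulr1.
rewrite sum_embed_distr -[RHS](distr_sum1 Dn_distr); apply: eq_bigr => D _ /=.
by under eq_bigr do rewrite mulr1; rewrite -mulr_sumr sum_unif mulr1.
Qed.

Variable M' : db n.+1 (B ^ S) -> word -> R.
Hypothesis M'_mech : is_mech M'.

Definition reduce (D : db n S) (y : 'I_S) : R :=
  \sum_(z : word) unif * \sum_(w : word | lcp_ord B S_gt0 w z == y) M' (embed D z) w.

Lemma reduce_sum_set D (A : {set 'I_S}) :
  \sum_(y in A) reduce D y =
  \sum_(z : word) unif * \sum_(w : word | lcp_ord B S_gt0 w z \in A) M' (embed D z) w.
Proof.
rewrite exchange_big /=; apply: eq_bigr => z _; rewrite -mulr_sumr; congr (_ * _).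
rewrite (partition_big (fun w : word => lcp_ord B S_gt0 w z) (mem A)) //.
by apply: eq_bigr => y yA; apply: eq_bigl => w; rewrite andb_idl // => /eqP->.
Qed.

Lemma reduce_mech : is_mech reduce.
Proof.
move=> D; split => [y|].
  apply: sumr_ge0 => z _; rewrite mulr_ge0 ?unif_ge0 //.
  by apply: sumr_ge0 => w _; apply: distr_ge0.
have := reduce_sum_set D [set: 'I_S].
rewrite (eq_bigl xpredT) => [->|y]; last by rewrite inE.
rewrite -[RHS]sum_unif; apply: eq_bigr => z _.
rewrite (eq_bigl xpredT) => [|w]; last by rewrite !inE.
by rewrite distr_sum1 ?mulr1.
Qed.

Lemma reduce_dp (eps d : R) : 0 <= eps -> 0 <= d -> is_dp eps d M' -> is_dp eps d reduce.
Proof.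
move=> eps_ge0 d_ge0 M'_dp D D' DD' A; rewrite !reduce_sum_set.
apply: le_trans (ler_sum _ (fun z _ => ler_wpM2l unif_ge0
  (dp_near eps_ge0 d_ge0 M'_mech M'_dp (embed_neighbors z DD') _))) _.
rewrite (eq_bigr (fun z : word => expR eps *
  (unif * \sum_(w : word | lcp_ord B S_gt0 w z \in A) M' (embed D' z) w) + unif * d)).
  by rewrite big_split /= -mulr_sumr -mulr_suml sum_unif mul1r.
by move=> z _; rewrite mulrDr mulrCA.
Qed.

Lemma unif_pow_pred : unif * (B ^ S.-1)%:R = B%:R^-1.
Proof.
rewrite -{1}(prednK S_gt0) expnS natrM invfM -mulrA mulVf ?mulr1 //.
by rewrite pnatr_eq0 -lt0n expn_gt0 B_gt0.
Qed.

(* Truncating the last row of [embed D z] to [maxD D] digits costs e^eps and d';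
   the resulting database depends on z only through its first [maxD D] digits. *)
Lemma escape_le (eps d' : R) D :
  (0 < n)%N -> 0 <= eps -> 0 <= d' -> is_dp eps d' M' ->
  unif * \sum_(z : word)
    \sum_(w : word | prefix B S (maxD D).+1 w == prefix B S (maxD D).+1 z) M' (embed D z) w
  <= expR eps / B%:R + d'.
Proof.
move=> n_gt0 eps_ge0 d'_ge0 M'_dp; set m := maxD D.
pose Y (z : word) := embed_db D (trunc m z) z.
have dp_z (z : word) :
    \sum_(w : word | prefix B S m.+1 w == prefix B S m.+1 z) M' (embed D z) w <=
    expR eps * \sum_(w : word | prefix B S m.+1 w == prefix B S m.+1 z) M' (Y z) w + d'.
  exact: dp_near eps_ge0 d'_ge0 M'_mech M'_dp (embed_db_near _ _ _) _.
have mass : \sum_(z : word)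
    \sum_(w : word | prefix B S m.+1 w == prefix B S m.+1 z) M' (Y z) w <= (B ^ S.-1)%:R.
  apply: (sum_prefix_mass B_gt0); first exact: maxD_lt.
    exact: (fun u => M'_mech (Y u)).
  by move=> u u' e; rewrite /Y (embed_db_trunc n_gt0 e).
apply: le_trans (ler_wpM2l unif_ge0 (ler_sum _ (fun z _ => dp_z z))) _.
rewrite big_split /= -mulr_sumr sumr_const card_ord mulrDr mulrCA lerD //.
  by rewrite ler_wpM2l ?expR_ge0 // -unif_pow_pred ler_wpM2l ?unif_ge0.
by rewrite -[d' *+ _]mulr_natl mulrA mulVf ?mul1r // pnatr_eq0 -lt0n expn_gt0 B_gt0.
Qed.

Lemma success_embed_le (eps d' : R) D : (0 < n)%N -> 0 <= eps -> 0 <= d' ->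
  is_dp eps d' M' ->
  \sum_(z : word) unif *
    \sum_(w : word | (minD (embed D z) <= w <= maxD (embed D z))%N) M' (embed D z) w
  <= \sum_(y : 'I_S | (minD D <= y <= maxD D)%N) reduce D y + (expR eps / B%:R + d').
Proof.
move=> n_gt0 eps_ge0 d'_ge0 M'_dp.
have -> : \sum_(y : 'I_S | (minD D <= y <= maxD D)%N) reduce D y =
    \sum_(z : word) unif *
      \sum_(w : word | (minD D <= lcp B S w z <= maxD D)%N) M' (embed D z) w.
  rewrite (eq_bigl (fun y => y \in [set y : 'I_S | (minD D <= y <= maxD D)%N])) => [|y].
    rewrite reduce_sum_set; apply: eq_bigr => z _; congr (_ * _).
    by apply: eq_bigl => w; rewrite inE.
  by rewrite inE.
pose E (z : word) :=
  \sum_(w : word | prefix B S (maxD D).+1 w == prefix B S (maxD D).+1 z) M' (embed D z) w.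
apply: le_trans (_ : _ <= \sum_(z : word) (unif *
    \sum_(w : word | (minD D <= lcp B S w z <= maxD D)%N) M' (embed D z) w + unif * E z)) _.
  apply: ler_sum => z _; rewrite -mulrDr ler_wpM2l ?unif_ge0 //.
  apply: sum_split_le => w; [exact: distr_ge0 | exact: lcp_embed].
by rewrite big_split /= lerD2l -mulr_sumr; exact: escape_le.
Qed.

Lemma success_embed_distr_le (eps d d' Q : R) (Dn : db n S -> R) : (0 < n)%N ->
  0 <= eps -> 0 <= d' -> d' <= d -> is_distr Dn ->
  (forall M, is_mech M -> is_dp eps d M -> success Dn M <= Q) ->
  is_dp eps d' M' -> success (embed_distr Dn) M' <= Q + (expR eps / B%:R + d').
Proof.
move=> n_gt0 eps_ge0 d'_ge0 d'_le Dn_distr Dn_bound M'_dp.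
have reduce_dp_d : is_dp eps d reduce.
  move=> D D' DD' A; apply: le_trans (reduce_dp eps_ge0 d'_ge0 M'_dp DD' A) _.
  by rewrite lerD2l.
have := Dn_bound _ reduce_mech reduce_dp_d.
rewrite /success sum_embed_distr => le_Q.
apply: le_trans (_ : _ <= \sum_D Dn D *
    (\sum_(y : 'I_S | (minD D <= y <= maxD D)%N) reduce D y + (expR eps / B%:R + d'))) _.
  apply: ler_sum => D _; under eq_bigr do rewrite -mulrA.
  by rewrite -mulr_sumr ler_wpM2l ?distr_ge0 // success_embed_le.
under eq_bigr do rewrite mulrDr.
by rewrite big_split /= -mulr_suml (distr_sum1 Dn_distr) mul1r lerD2r.
Qed.

End Reduction.

Arguments embed_distr {R n} B {S}.

Definition flip_db (D : db 1 2) : db 1 2 := [ffun i => rev_ord (D i)].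

Lemma flip_dbK : involutive flip_db.
Proof. by move=> D; apply/ffunP => i; rewrite !ffunE rev_ordK. Qed.

Lemma rev_ord2_neq (x : 'I_2) : x != rev_ord x.
Proof. by case: x => [[|[|]]]. Qed.

Lemma neighbors_flip D : neighbors D (flip_db D).
Proof.
rewrite /neighbors -[RHS](card_ord 1); apply: eq_card => i.
by rewrite !inE ffunE rev_ord2_neq.
Qed.

Lemma sum_ord2 (R : realType) (f : 'I_2 -> R) x : \sum_y f y = f x + f (rev_ord x).
Proof.
rewrite (bigD1 x) //= (big_pred1 (rev_ord x)) // => y.
by case: x y => [[|[|//]] ?] [[|[|//]] ?].
Qed.

Lemma minD1 S (D : db 1 S) : minD D = D ord0.
Proof. by rewrite /minD big_ord_recl big_ord0; apply/minn_idPl; exact: ltnW. Qed.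

Lemma maxD1 S (D : db 1 S) : maxD D = D ord0.
Proof. by rewrite /maxD big_ord_recl big_ord0 maxn0. Qed.

Lemma card_db12 : #|{: db 1 2}| = 2%N.
Proof. by rewrite card_ffun !card_ord. Qed.

Lemma success_base (R : realType) (eps d : R) (M : db 1 2 -> 'I_2 -> R) :
  0 <= eps -> is_mech M -> is_dp eps d M ->
  success (fun _ => 2^-1) M <= (expR eps + d) / (expR eps + 1).
Proof.
move=> eps_ge0 M_mech M_dp; pose a D := M D (D ord0).
have -> : success (fun _ => 2^-1) M = 2^-1 * \sum_D a D.
  rewrite /success mulr_sumr; apply: eq_bigr => D _; congr (_ * _).
  rewrite minD1 maxD1 (eq_bigl (pred1 (D ord0))) ?big_pred1_eq // => y.
  by rewrite /= -eqn_leq eq_sym.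
have a_flip D : a D <= expR eps * (1 - a (flip_db D)) + d.
  have := M_dp D (flip_db D) (neighbors_flip D) [set D ord0]; rewrite !big_set1.
  suff -> : M (flip_db D) (D ord0) = 1 - a (flip_db D) by [].
  rewrite -(distr_sum1 (M_mech (flip_db D))) (sum_ord2 _ (flip_db D ord0)) /a.
  by rewrite addrAC subrr add0r ffunE rev_ordK.
have sum_flip : \sum_D a (flip_db D) = \sum_D a D.
  by rewrite [RHS](reindex_inj (can_inj flip_dbK)).
set s := \sum_D a D.
have : s <= expR eps * (2 - s) + 2 * d.
  apply: le_trans (ler_sum _ (fun D _ => a_flip D)) _.
  rewrite big_split /= -mulr_sumr sumrB sum_flip !sumr_const card_db12.
  by rewrite -[d *+ 2]mulr_natl.
have e_ge1 : 1 <= expR eps by apply: le_trans (expR_ge1Dx eps); rewrite lerDl.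
rewrite ler_pdivlMr; last by rewrite ltr_pwDr // expR_gt0.
move: e_ge1; set e := expR eps; nra.
Qed.

Lemma PboundS (R : realType) (eps : R) (delta : nat -> R) n :
  Pbound eps delta n.+1 = Pbound eps delta n + (expR eps + 1) * delta n.+1.
Proof. by rewrite /Pbound big_nat_recr //= mulrDr addrA. Qed.

Lemma hard_distribution (R : realType) (eps : R) (delta : nat -> R) (b : nat -> nat) :
  0 <= eps -> (forall n, (0 < n)%N -> 0 < delta n) ->
  (forall n, (0 < n)%N -> delta n.+1 <= delta n) ->
  (forall n, (0 < n)%N -> delta n = ((b n)%:R)^-1) ->
  forall k, exists Dn : db k.+1 (Sseq b k.+1) -> R, is_distr Dn /\
    forall M, is_mech M -> is_dp eps (delta k.+1) M ->
      success Dn M <= Pbound eps delta k.+1 - expR eps * delta k.+1.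
Proof.
move=> eps_ge0 delta_gt0 delta_dec delta_b.
have b_gt0 k : (0 < k)%N -> (0 < b k)%N.
  move=> k_gt0; rewrite lt0n; apply: contraTneq (delta_gt0 k k_gt0) => bk.
  by rewrite delta_b // bk invr0 ltxx.
have S_gt0 k : (0 < Sseq b k.+1)%N.
  by elim: k => //= k IHk; rewrite expn_gt0 b_gt0.
elim=> [|k [Dn [Dn_distr Dn_bound]]].
  exists (fun _ => 2^-1); split.
    split=> [_|]; first by rewrite invr_ge0 ler0n.
    by rewrite sumr_const card_db12 -[_ *+ 2]mulr_natl mulfV.
  move=> M M_mech M_dp; apply: le_trans (success_base eps_ge0 M_mech M_dp) _.
  rewrite /Pbound big_nat1 mulrDl -addrA lerD2l.
  have -> : (expR eps + 1) * delta 1%N - expR eps * delta 1%N = delta 1%N by ring.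
  rewrite ler_pdivrMr ?ler_peMr ?lerDl ?(ltW (delta_gt0 _ _)) //.
  by have := expR_ge0 eps; lra.
exists (embed_distr (b k.+1) Dn); split.
  by apply: embed_distr_is_distr => //; exact: b_gt0.
move=> M' M'_mech M'_dp.
have := @success_embed_distr_le R k.+1 (b k.+1) (Sseq b k.+1) (b_gt0 k.+1 isT)
  (S_gt0 k) M' M'_mech _ _ _ _ Dn isT eps_ge0 (ltW (delta_gt0 k.+2 isT))
  (delta_dec k.+1 isT) Dn_distr Dn_bound M'_dp.
move/le_trans; apply.
rewrite -delta_b // [Pbound _ _ k.+2]PboundS; lra.
Qed.

Theorem lemma3p3 (R : realType) (eps beta : R) (delta : nat -> R) (b : nat -> nat) :
  0 < eps < 1 / 4 -> 0 < beta < 1 / 4 ->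
  (forall n, (0 < n)%N -> 0 < delta n) ->
  (forall m n, (0 < m)%N -> (m <= n)%N -> delta n <= delta m) ->
  (forall n, (0 < n)%N -> Pbound eps delta n <= 1 - beta) ->
  (forall n, (0 < n)%N -> delta n = ((b n)%:R)^-1) ->
  forall n, (0 < n)%N ->
  exists Dn : db n (Sseq b n) -> R,
    is_distr Dn /\
    forall M : db n (Sseq b n) -> 'I_(Sseq b n) -> R,
      is_mech M -> is_dp eps (delta n) M -> success Dn M <= Pbound eps delta n.
Proof.
move=> /andP[eps_gt0 _] _ delta_gt0 delta_mono _ delta_b [//|k] _.
have delta_dec m : (0 < m)%N -> delta m.+1 <= delta m.
  by move=> m_gt0; apply: delta_mono.
have [Dn [Dn_distr Dn_bound]] := hard_distribution (ltW eps_gt0) delta_gt0 delta_dec delta_b k.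
exists Dn; split=> // M M_mech M_dp.
apply: le_trans (Dn_bound M M_mech M_dp) _.
by rewrite gerDl oppr_le0 mulr_ge0 ?expR_ge0 // ltW ?delta_gt0.
Qed.
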